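(* Let $m,n,l>0$ be pairwise coprime square-free integers with $n>m$, and let $K=\mathbb{Q}(\sqrt{-ml},\sqrt{-nl})$. Then \[ M(\mathcal{O}_K)\ge \begin{cases} \tfrac{1}{256}\, l n & \text{if } n>l,\\[2pt] \tfrac{1}{2304}\, l^2 & \text{if } l>n. \end{cases} \] Moreover, in all cases $\tfrac{1}{256}\, l n \le M(\mathcal{O}_K)$.
   Context: For a nonconstant polynomial $f(x)=c\prod_{i=1}^d (x-\alpha_i)\in\mathbb{C}[x]$, the Mahler measure is $M(f)=|c|\prod_{|\alpha_i|\ge 1}|\alpha_i|$. For an algebraic number $\alpha$, $M(\alpha)$ is the Mahler measure of its minimal polynomial over $\mathbb{Z}$ (with content $1$). For a number field $K$ with ring of integers $\mathcal{O}_K$, $M(\mathcal{O}_K)=\min\{M(\alpha):\alpha\in\mathcal{O}_K,\ \mathbb{Q}(\alpha)=K\}$. *)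

From HB Require Import structures.
From mathcomp Require Import all_boot all_order all_algebra all_field.
Set Implicit Arguments. Unset Strict Implicit. Unset Printing Implicit Defensive.
Import Order.TTheory GRing.Theory Num.Theory.
Local Open Scope ring_scope.

Definition roots_of (f : {poly algC}) : seq algC :=
  sval (closed_field_poly_normal f).

Definition mahler (f : {poly algC}) : algC :=
  `|lead_coef f| * \prod_(z <- roots_of f) Num.max 1 `|z|.

(* p is the minimal polynomial of alpha over Z with content 1 (and positive
   leading coefficient): a primitive integer multiple of the monic minimal
   polynomial of alpha over Q. *)
Definition is_Zminpoly (alpha : algC) (p : {poly int}) : Prop :=
  zcontents p = 1 /\
  map_poly (intr : int -> algC) p = (lead_coef p)%:~R *: minCpoly alpha.

Definition mahler_num (alpha : algC) (M : algC) : Prop :=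
  exists2 p, is_Zminpoly alpha p & M = mahler (map_poly (intr : int -> algC) p).

Definition sqa (m n l : nat) : algC := sqrtC (- (m * l)%:R).
Definition sqb (m n l : nat) : algC := sqrtC (- (n * l)%:R).

Definition inK (m n l : nat) (x : algC) : Prop :=
  exists r : rat * rat * rat * rat,
    x = ratr r.1.1.1 + ratr r.1.1.2 * sqa m n l + ratr r.1.2 * sqb m n l
        + ratr r.2 * (sqa m n l * sqb m n l).

Definition inQgen (alpha x : algC) : Prop :=
  exists q : {poly rat}, x = (map_poly ratr q).[alpha].

Definition inOK (m n l : nat) (x : algC) : Prop := inK m n l x /\ x \in Aint.

Definition squarefree (k : nat) : Prop := forall p, prime p -> ~~ (p * p %| k)%N.

(* Write alpha = x + y A + z B + w A B with A = sqrt(-ml), B = sqrt(-nl).  As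
   alpha generates K, its images under the four sign changes of (A, B) are
   distinct roots of its minimal polynomial, and two of them are the complex
   conjugates of the other two, alpha and alpha'.  Hence
   M(alpha) >= max(1,|alpha|)^2 max(1,|alpha'|)^2, which dominates both
   (|alpha|^2 + |alpha'|^2)/2 and |alpha alpha'|^2, two rational expressions in
   x, y, z, w.  Integrality of alpha makes its sign-symmetrised combinations
   4yA, 4zB, 4wAB integral, so by squarefreeness 4y, 4z and 4lw are integers.
   Finally |alpha alpha'|^2 is a sum of squares containing l^2 (my^2 - nz^2)^2,
   where 16 (my^2 - nz^2) is a nonzero integer because m/n is not a square. *)

From HB Require Import structures.
From mathcomp Require Import all_boot all_order all_algebra all_field.
From mathcomp Require Import ring lra zify.
Set Implicit Arguments. Unset Strict Implicit. Unset Printing Implicit Defensive.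
Import Order.TTheory GRing.Theory Num.Theory.
Local Open Scope ring_scope.

Lemma squarefreeM (a b : nat) :
  coprime a b -> squarefree a -> squarefree b -> squarefree (a * b).
Proof.
move=> cab sqf_a sqf_b p p_pr; apply/negP => dvd_pp_ab.
have [p_a | p_Na] := boolP (p %| a)%N.
- have cpb : coprime (p * p) b by rewrite coprimeMl andbb (coprime_dvdl p_a cab).
  by move: dvd_pp_ab; rewrite Gauss_dvdl // (negbTE (sqf_a p p_pr)).
- have cpa : coprime (p * p) a by rewrite coprimeMl andbb prime_coprime.
  by move: dvd_pp_ab; rewrite mulnC Gauss_dvdl // (negbTE (sqf_b p p_pr)).
Qed.

(* Writing [q = u / d] in lowest terms, [d^2 | u^2 k] forces [d^2 | k], hence [d = 1]. *)
Lemma squarefree_int_of_sqrM (k : nat) (q : rat) :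
  squarefree k -> q ^+ 2 * k%:R \is a Num.int -> q \is a Num.int.
Proof.
move=> sqf_k /intrP [t Dt]; rewrite Qint_def.
have den_gt0 := denq_gt0 q.
have Ent : numq q ^+ 2 * k%:R = t * denq q ^+ 2 :> int.
  apply: (@intr_inj rat); rewrite !intrM rmorph_nat -Dt.
  set d := denq q; set u := numq q; rewrite -(divq_num_den q) -/u -/d.
  by field; rewrite intr_eq0 gt_eqF.
have cop : coprime (`|denq q| ^ 2) (`|numq q| ^ 2).
  by rewrite coprimeXl // coprimeXr // coprime_sym coprime_num_den.
have dvd_k : (`|denq q| ^ 2 %| k)%N.
  rewrite -(Gauss_dvdl _ cop) mulnC.
  have /(congr1 absz) := Ent; rewrite !abszM natz !mulnn => ->.
  exact: dvdn_mull.
suff den1 : `|denq q|%N = 1%N by rewrite -(gez0_abs (ltW den_gt0)) den1.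
have [den_lt1 | den_gt1 | //] := ltngtP `|denq q| 1.
  by move: den_gt0 den_lt1; case: (denq q) => [[|j]|j].
have : (pdiv `|denq q| * pdiv `|denq q| %| k)%N.
  by apply: dvdn_trans dvd_k; rewrite mulnn dvdn_exp2r ?pdiv_dvd.
by rewrite (negbTE (sqf_k _ (pdiv_prime den_gt1))).
Qed.

Lemma squarefree_nonsquare (k : nat) (u v : rat) :
  squarefree k -> (1 < k)%N -> u ^+ 2 = v ^+ 2 * k%:R -> u = 0 /\ v = 0.
Proof.
move=> sqf_k k_gt1 Duv.
have k0 : k%:R != 0 :> rat by rewrite pnatr_eq0 -lt0n ltnW.
have [u0 | u_neq0] := eqVneq u 0.
  split=> //; move/eqP: Duv.
  by rewrite u0 expr0n eq_sym mulf_eq0 (negbTE k0) orbF sqrf_eq0 => /eqP.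
have Dq : (v / u) ^+ 2 * k%:R = 1.
  by rewrite expr_div_n mulrAC -Duv divff // expf_neq0.
have q_int : v / u \is a Num.int by apply: squarefree_int_of_sqrM sqf_k _; rewrite Dq.
have q_neq0 : v / u != 0.
  by apply: contra_eq_neq Dq => ->; rewrite expr0n mul0r eq_sym oner_neq0.
have := sqr_intr_ge1 q_int q_neq0.
have : 1 < k%:R :> rat by rewrite ltr1n.
have := Dq; nra.
Qed.

Lemma ratio_nonsquare (m n : nat) :
    (0 < m)%N -> coprime m n -> squarefree m -> squarefree n -> (m < n)%N ->
  forall u v : rat, u ^+ 2 * m%:R = v ^+ 2 * n%:R -> u = 0 /\ v = 0.
Proof.
move=> m_gt0 cop sqf_m sqf_n lt_mn u v Duv.
have mn_gt1 : (1 < m * n)%N by nia.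
have Dum : (u * m%:R) ^+ 2 = v ^+ 2 * (m * n)%:R.
  by transitivity (u ^+ 2 * m%:R * m%:R); [ring | rewrite Duv natrM; ring].
have [/eqP um0 ->] := squarefree_nonsquare (squarefreeM cop sqf_m sqf_n) mn_gt1 Dum.
by split=> //; move: um0; rewrite mulf_eq0 pnatr_eq0 (negbTE (lt0n_neq0 m_gt0)) orbF => /eqP.
Qed.

Lemma nonsquare_ml_nl (m n l : nat) : (0 < m)%N -> (0 < l)%N ->
    (forall u v : rat, u ^+ 2 * m%:R = v ^+ 2 * n%:R -> u = 0 /\ v = 0) ->
  forall u v : rat, u ^+ 2 = v ^+ 2 * ((m * l)%:R * (n * l)%:R) -> u = 0 /\ v = 0.
Proof.
move=> m_gt0 l_gt0 mn_nonsq u v Duv.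
have Dvlm : u ^+ 2 * m%:R = (v * l%:R * m%:R) ^+ 2 * n%:R by rewrite Duv !natrM; ring.
have [-> /eqP vlm0] := mn_nonsq _ _ Dvlm.
split=> //; move: vlm0; rewrite !mulf_eq0 !pnatr_eq0.
by rewrite (negbTE (lt0n_neq0 m_gt0)) (negbTE (lt0n_neq0 l_gt0)) !orbF => /eqP.
Qed.

Lemma ler_prod_subset_ge1 (R : numDomainType) (T : eqType) (F : T -> R)
    (t s : seq T) :
  (forall z, 1 <= F z) -> uniq t -> {subset t <= s} ->
  \prod_(z <- t) F z <= \prod_(z <- s) F z.
Proof.
move=> F_ge1; elim: t s => [|x t IHt] s /=.
  by move=> _ _; rewrite big_nil; apply: (big_ind (fun y => 1 <= y)) => //; apply: mulr_ege1.
case/andP=> x_t uniq_t t_s.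
have x_s : x \in s by apply: t_s; rewrite mem_head.
rewrite big_cons (perm_big _ (perm_to_rem x_s)) big_cons.
apply: ler_wpM2l; first exact: le_trans ler01 (F_ge1 x).
apply: IHt => // y y_t; rewrite (rem_mem (contraNneq _ x_t)) ?t_s ?inE ?y_t ?orbT //.
by move=> <-.
Qed.

Lemma max1_norm_ge1 (R : numDomainType) (z : R) : 1 <= Num.max 1 `|z|.
Proof. by rewrite comparable_le_max ?real_comparable ?normr_real ?lexx. Qed.

Lemma norm_le_max1 (R : numDomainType) (z : R) : `|z| <= Num.max 1 `|z|.
Proof. by rewrite comparable_le_max ?real_comparable ?normr_real ?lexx ?orbT. Qed.

Lemma mahler_Zminpoly_ge (alpha : algC) (p : {poly int}) (s : seq algC) :
  is_Zminpoly alpha p -> uniq s -> all (root (minCpoly alpha)) s ->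
  \prod_(z <- s) Num.max 1 `|z| <= mahler (map_poly intr p).
Proof.
move=> [content_p Dp] uniq_s /allP s_roots.
have lead_p_neq0 : (lead_coef p)%:~R != 0 :> algC.
  by rewrite intr_eq0 lead_coef_eq0; apply: contra_eq_neq content_p => ->; rewrite zcontents0.
have lead_map : lead_coef (map_poly intr p : {poly algC}) = (lead_coef p)%:~R.
  by rewrite Dp lead_coefZ (monicP (minCpoly_monic _)) mulr1.
rewrite /mahler /roots_of; case: closed_field_poly_normal => rs /= Drs.
have s_rs : {subset s <= rs}.
  move=> z /s_roots z_root; rewrite -root_prod_XsubC -(rootZ _ _ lead_p_neq0).
  by rewrite -lead_map -Drs Dp rootZ.
apply: le_trans (ler_prod_subset_ge1 (@max1_norm_ge1 _) uniq_s s_rs) _.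
apply: ler_peMl; first by apply: prodr_ge0 => z _; apply: le_trans (max1_norm_ge1 z).
by rewrite lead_map -intr_norm ler1z -gtz0_ge1 normr_gt0 -(intr_eq0 algC).
Qed.

Lemma conjC_sqr_neg (A c : algC) : 0 < c -> A ^+ 2 = - c -> A^* = - A.
Proof.
move=> c_gt0 DA.
have : (A^* - A) * (A^* + A) = 0.
  have : A^* ^+ 2 = A ^+ 2 by rewrite -rmorphXn DA rmorphN /= conj_Creal ?gtr0_real.
  by move=> DAc; rewrite -subr_sqr DAc subrr.
move/eqP; rewrite mulf_eq0 subr_eq0 addr_eq0 => /orP [/eqP DAc | /eqP //].
have : 0 <= `|A| ^+ 2 by rewrite exprn_ge0.
by rewrite normCK DAc -expr2 DA oppr_ge0 => /(lt_le_trans c_gt0); rewrite ltxx.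
Qed.

(* Rational polynomials commute with the automorphism [v |-> -v] of [Q(u, v)]. *)
Lemma horner_quad_flip (u v : algC) (a b : rat) :
    u ^+ 2 = ratr a -> v ^+ 2 = ratr b ->
  forall (f : {poly rat}) (p0 p1 q0 q1 : rat), exists P0 P1 Q0 Q1 : rat,
    (map_poly ratr f).[ratr p0 + ratr p1 * u + (ratr q0 + ratr q1 * u) * v]
      = ratr P0 + ratr P1 * u + (ratr Q0 + ratr Q1 * u) * v /\
    (map_poly ratr f).[ratr p0 + ratr p1 * u - (ratr q0 + ratr q1 * u) * v]
      = ratr P0 + ratr P1 * u - (ratr Q0 + ratr Q1 * u) * v.
Proof.
move=> Du Dv f p0 p1 q0 q1.
elim/poly_ind: f => [|g c [P0 [P1 [Q0 [Q1 [Dg Dg']]]]]].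
  by exists 0, 0, 0, 0; rewrite map_poly0 !horner0 rmorph0; split; ring.
exists (P0 * p0 + P1 * p1 * a + (Q0 * q0 + Q1 * q1 * a) * b + c),
  (P0 * p1 + P1 * p0 + (Q0 * q1 + Q1 * q0) * b),
  (P0 * q0 + P1 * q1 * a + Q0 * p0 + Q1 * p1 * a),
  (P0 * q1 + P1 * q0 + Q0 * p1 + Q1 * p0).
rewrite rmorphD rmorphM /= map_polyX map_polyC /= !hornerE Dg Dg'.
by split; ring: Du Dv.
Qed.

Lemma inQgen_quad (u t : algC) (c x s : rat) :
  u ^+ 2 = ratr c -> inQgen (ratr x + ratr s * u) t ->
  exists r0 r1 : rat, t = ratr r0 + ratr r1 * u.
Proof.
move=> Du [f ->].
have Dv : (0 : algC) ^+ 2 = ratr 0 by rewrite rmorph0 expr2 mulr0.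
have [P0 [P1 [Q0 [Q1 [Df _]]]]] := horner_quad_flip Du Dv f x s 0 0.
by exists P0, P1; rewrite !mulr0 !addr0 in Df.
Qed.

Lemma sqr_norm_le_max1 (R : numDomainType) (u v : R) :
  let U := Num.max 1 `|u| ^+ 2 * Num.max 1 `|v| ^+ 2 in
  [/\ `|u| ^+ 2 <= U, `|v| ^+ 2 <= U & `|u| ^+ 2 * `|v| ^+ 2 <= U].
Proof.
have sqr_le (t : R) : `|t| ^+ 2 <= Num.max 1 `|t| ^+ 2.
  by rewrite !expr2; apply: ler_pM; rewrite ?normr_ge0 ?norm_le_max1.
have sqr_ge1 (t : R) : 1 <= Num.max 1 `|t| ^+ 2 by rewrite exprn_ege1 ?max1_norm_ge1.
split.
- by apply: le_trans (sqr_le u) _; rewrite ler_peMr ?(le_trans ler01).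
- by apply: le_trans (sqr_le v) _; rewrite ler_peMl ?(le_trans ler01).
- by apply: ler_pM; rewrite ?exprn_ge0 ?normr_ge0.
Qed.

Section Biquadratic.

Variables (a b : rat) (A B : algC).
Hypotheses (a_gt0 : 0 < a) (b_gt0 : 0 < b).
Hypotheses (sqrA : A ^+ 2 = - ratr a) (sqrB : B ^+ 2 = - ratr b).
Hypothesis ab_nonsquare : forall u v : rat, u ^+ 2 = v ^+ 2 * (a * b) -> u = 0 /\ v = 0.

Definition biquad (x y z w : rat) : algC :=
  ratr x + ratr y * A + ratr z * B + ratr w * (A * B).

Definition biquad_conjugates (x y z w : rat) : seq algC :=
  [:: biquad x y z w; biquad x y (- z) (- w);
      biquad x (- y) (- z) w; biquad x (- y) z (- w)].

(* For [alpha = biquad x y z w] and [alpha' = biquad x y (- z) (- w)],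
   [biquad_sqmean] is [(|alpha|^2 + |alpha'|^2) / 2] and [biquad_norm] is
   [|alpha alpha'|^2], the field norm of [alpha]. *)
Definition biquad_sqmean (x y z w : rat) : rat :=
  x ^+ 2 + y ^+ 2 * a + z ^+ 2 * b + w ^+ 2 * (a * b).

Definition biquad_norm (x y z w : rat) : rat :=
  biquad_sqmean x y z w ^+ 2 - 4%:R * (x * w - y * z) ^+ 2 * (a * b).

Let conjA : A^* = - A.
Proof. by apply: conjC_sqr_neg sqrA; rewrite ltr0q. Qed.

Let conjB : B^* = - B.
Proof. by apply: conjC_sqr_neg sqrB; rewrite ltr0q. Qed.

Lemma conjC_biquad (x y z w : rat) : (biquad x y z w)^* = biquad x (- y) (- z) w.
Proof.
rewrite /biquad !rmorphD !(rmorphM _ (ratr _)) (rmorphM _ A) !fmorph_rat /=.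
by rewrite conjA conjB !rmorphN; ring.
Qed.

Lemma biquad_eq0 (x y z w : rat) :
  biquad x y z w = 0 -> [/\ x = 0, y = 0, z = 0 & w = 0].
Proof.
(* Adding and subtracting the complex conjugate splits the relation into
   [x + w A B = 0] and [y A + z B = 0], whose squares are rational. *)
move=> Dalpha.
have Dalpha' : biquad x (- y) (- z) w = 0 by rewrite -conjC_biquad Dalpha conjC0.
have two_neq0 : 2%:R != 0 :> algC by rewrite pnatr_eq0.
have /eqP : 2%:R * (ratr x + ratr w * (A * B)) = 0.
  by rewrite -[0]addr0 -{1}Dalpha -Dalpha' /biquad !rmorphN; ring.
rewrite mulf_eq0 (negbTE two_neq0) addr_eq0 => /eqP Dx.
have /eqP : 2%:R * (ratr y * A + ratr z * B) = 0.
  by rewrite -[0]subr0 -{1}Dalpha -Dalpha' /biquad !rmorphN; ring.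
rewrite mulf_eq0 (negbTE two_neq0) addr_eq0 => /eqP Dy.
have [x0 w0] : x = 0 /\ w = 0.
  apply: ab_nonsquare; apply: (fmorph_inj (@ratr algC)).
  by ring: Dx sqrA sqrB.
have [ya0 z0] : y * a = 0 /\ z = 0.
  apply: ab_nonsquare; apply: (fmorph_inj (@ratr algC)).
  transitivity (- (ratr y * A) ^+ 2 * ratr a); first by ring: sqrA.
  by rewrite Dy; ring: sqrB.
by move/eqP: ya0; rewrite mulf_eq0 (gt_eqF a_gt0) orbF => /eqP.
Qed.

Lemma biquad_inj (x y z w x' y' z' w' : rat) :
  biquad x y z w = biquad x' y' z' w' -> [/\ x = x', y = y', z = z' & w = w'].
Proof.
move=> /eqP; rewrite -subr_eq0 => /eqP Ddiff.
have [] := @biquad_eq0 (x - x') (y - y') (z - z') (w - w').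
  by rewrite -Ddiff /biquad !rmorphB; ring.
by move=> /subr0_eq -> /subr0_eq -> /subr0_eq -> /subr0_eq ->.
Qed.

Lemma A_neq_biquad (x z w : rat) : A != biquad x 0 z w.
Proof.
have -> : A = biquad 0 1 0 0 by rewrite /biquad rmorph0 rmorph1; ring.
by apply/eqP => /biquad_inj [_ /eqP]; rewrite oner_eq0.
Qed.

Lemma B_neq_biquad (x y w : rat) : B != biquad x y 0 w.
Proof.
have -> : B = biquad 0 0 1 0 by rewrite /biquad rmorph0 rmorph1; ring.
by apply/eqP => /biquad_inj [_ _ /eqP]; rewrite oner_eq0.
Qed.

Lemma root_biquad_flipB (f : {poly rat}) (x y z w : rat) :
  root (map_poly ratr f) (biquad x y z w) ->
  root (map_poly ratr f) (biquad x y (- z) (- w)).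
Proof.
have sqrA' : A ^+ 2 = ratr (- a) by rewrite rmorphN.
have sqrB' : B ^+ 2 = ratr (- b) by rewrite rmorphN.
have [P0 [P1 [Q0 [Q1 [Df Df']]]]] := horner_quad_flip sqrA' sqrB' f x y z w.
have -> : biquad x y z w = ratr x + ratr y * A + (ratr z + ratr w * A) * B.
  by rewrite /biquad; ring.
have -> : biquad x y (- z) (- w) = ratr x + ratr y * A - (ratr z + ratr w * A) * B.
  by rewrite /biquad !rmorphN; ring.
rewrite /root Df Df'; move/eqP=> Dzero.
have [-> -> -> ->] : [/\ P0 = 0, P1 = 0, Q0 = 0 & Q1 = 0].
  by apply: biquad_eq0; rewrite -Dzero /biquad; ring.
by rewrite rmorph0; apply/eqP; ring.
Qed.

Lemma root_biquad_flipA (f : {poly rat}) (x y z w : rat) :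
  root (map_poly ratr f) (biquad x y z w) ->
  root (map_poly ratr f) (biquad x (- y) z (- w)).
Proof.
have sqrA' : A ^+ 2 = ratr (- a) by rewrite rmorphN.
have sqrB' : B ^+ 2 = ratr (- b) by rewrite rmorphN.
have [P0 [P1 [Q0 [Q1 [Df Df']]]]] := horner_quad_flip sqrB' sqrA' f x z y w.
have -> : biquad x y z w = ratr x + ratr z * B + (ratr y + ratr w * B) * A.
  by rewrite /biquad; ring.
have -> : biquad x (- y) z (- w) = ratr x + ratr z * B - (ratr y + ratr w * B) * A.
  by rewrite /biquad !rmorphN; ring.
rewrite /root Df Df'; move/eqP=> Dzero.
have [-> -> -> ->] : [/\ P0 = 0, Q0 = 0, P1 = 0 & Q1 = 0].
  by apply: biquad_eq0; rewrite -Dzero /biquad; ring.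
by rewrite rmorph0; apply/eqP; ring.
Qed.

Lemma biquad_primitive (x y z w : rat) :
  inQgen (biquad x y z w) A -> inQgen (biquad x y z w) B ->
  [/\ ~ (y = 0 /\ z = 0), ~ (y = 0 /\ w = 0) & ~ (z = 0 /\ w = 0)].
Proof.
have sqrA' : A ^+ 2 = ratr (- a) by rewrite rmorphN.
have sqrB' : B ^+ 2 = ratr (- b) by rewrite rmorphN.
have sqrAB : (A * B) ^+ 2 = ratr (a * b) by rewrite exprMn sqrA sqrB rmorphM mulrNN.
move=> genA genB; split=> [[y0 z0] | [y0 w0] | [z0 w0]].
- have /(inQgen_quad sqrAB) [r0 [r1 DA]] : inQgen (ratr x + ratr w * (A * B)) A.
    by move: genA; rewrite /biquad y0 z0 rmorph0 !mul0r !addr0.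
  by move: (A_neq_biquad r0 0 r1); rewrite {1}DA /biquad rmorph0 !mul0r !addr0 eqxx.
- have /(inQgen_quad sqrB') [r0 [r1 DA]] : inQgen (ratr x + ratr z * B) A.
    by move: genA; rewrite /biquad y0 w0 rmorph0 !mul0r !addr0.
  by move: (A_neq_biquad r0 r1 0); rewrite {1}DA /biquad rmorph0 !mul0r !addr0 eqxx.
- have /(inQgen_quad sqrA') [r0 [r1 DB]] : inQgen (ratr x + ratr y * A) B.
    by move: genB; rewrite /biquad z0 w0 rmorph0 !mul0r !addr0.
  by move: (B_neq_biquad r0 r1 0); rewrite {1}DB /biquad rmorph0 !mul0r !addr0 eqxx.
Qed.

Lemma root_biquad_conjugates (x y z w : rat) :
  all (root (minCpoly (biquad x y z w))) (biquad_conjugates x y z w).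
Proof.
have [q [Dq _] _] := minCpolyP (biquad x y z w).
have root1 : root (map_poly ratr q) (biquad x y z w) by rewrite -Dq root_minCpoly.
have root2 := root_biquad_flipB root1.
have := root_biquad_flipA root2; rewrite opprK => root3.
by rewrite /= Dq root1 root2 root3 (root_biquad_flipA root1).
Qed.

Lemma uniq_biquad_conjugates (x y z w : rat) :
  ~ (y = 0 /\ z = 0) -> ~ (y = 0 /\ w = 0) -> ~ (z = 0 /\ w = 0) ->
  uniq (biquad_conjugates x y z w).
Proof.
have eqN0 (c : rat) : c = - c -> c = 0 by lra.
have eqNr0 (c : rat) : - c = c -> c = 0 by lra.
move=> nyz nyw nzw; rewrite /= !inE !negb_or !andbT.
apply/and3P; split; [apply/and3P; split | apply/andP; split | ]; apply/eqP.
- by move/biquad_inj=> [_ _ /eqN0 z0 /eqN0 w0]; apply: nzw.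
- by move/biquad_inj=> [_ /eqN0 y0 /eqN0 z0 _]; apply: nyz.
- by move/biquad_inj=> [_ /eqN0 y0 _ /eqN0 w0]; apply: nyw.
- by move/biquad_inj=> [_ /eqN0 y0 _ /eqNr0 w0]; apply: nyw.
- by move/biquad_inj=> [_ /eqN0 y0 /eqNr0 z0 _]; apply: nyz.
- by move/biquad_inj=> [_ _ /eqNr0 z0 /eqN0 w0]; apply: nzw.
Qed.

Lemma biquad_Aint_coords (x y z w : rat) : biquad x y z w \in Aint ->
  [/\ ratr (4%:R * y) * A \in Aint, ratr (4%:R * z) * B \in Aint
    & ratr (4%:R * w) * (A * B) \in Aint].
Proof.
move=> Aint_alpha.
have : all (mem Aint) (biquad_conjugates x y z w).
  apply/allP => t /(allP (root_biquad_conjugates x y z w)) t_root.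
  exact: root_monic_Aint t_root (minCpoly_monic _) Aint_alpha.
rewrite /= andbT => /and4P [I1 I2 I3 I4]; split.
- have -> : ratr (4%:R * y) * A = biquad x y z w + biquad x y (- z) (- w)
                                  - biquad x (- y) (- z) w - biquad x (- y) z (- w).
    by rewrite /biquad !rmorphN; ring.
  exact: rpredB (rpredB (rpredD I1 I2) I3) I4.
- have -> : ratr (4%:R * z) * B = biquad x y z w - biquad x y (- z) (- w)
                                  - biquad x (- y) (- z) w + biquad x (- y) z (- w).
    by rewrite /biquad !rmorphN; ring.
  exact: rpredD (rpredB (rpredB I1 I2) I3) I4.
- have -> : ratr (4%:R * w) * (A * B) = biquad x y z w - biquad x y (- z) (- w)
                                  + biquad x (- y) (- z) w - biquad x (- y) z (- w).
    by rewrite /biquad !rmorphN; ring.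
  exact: rpredB (rpredD (rpredB I1 I2) I3) I4.
Qed.

Lemma biquad_mahler_ge (x y z w : rat) (p : {poly int}) :
    is_Zminpoly (biquad x y z w) p ->
    ~ (y = 0 /\ z = 0) -> ~ (y = 0 /\ w = 0) -> ~ (z = 0 /\ w = 0) ->
  ratr (biquad_sqmean x y z w) <= mahler (map_poly intr p) /\
  ratr (biquad_norm x y z w) <= mahler (map_poly intr p).
Proof.
move=> Zp nyz nyw nzw.
have := mahler_Zminpoly_ge Zp (uniq_biquad_conjugates x nyz nyw nzw)
                           (root_biquad_conjugates x y z w).
set a1 := biquad x y z w; set a2 := biquad x y (- z) (- w).
have Dsq1 : `|a1| ^+ 2 = a1 * biquad x (- y) (- z) w by rewrite normCK conjC_biquad.
have Dsq2 : `|a2| ^+ 2 = a2 * biquad x (- y) z (- w).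
  by rewrite normCK conjC_biquad opprK.
have norm3 : `|biquad x (- y) (- z) w| = `|a1| by rewrite -conjC_biquad norm_conjC.
have norm4 : `|biquad x (- y) z (- w)| = `|a2|.
  by rewrite -[z in LHS]opprK -conjC_biquad norm_conjC.
rewrite /biquad_conjugates !big_cons big_nil norm3 norm4.
have [le1 le2 le12] := sqr_norm_le_max1 a1 a2.
have -> : Num.max 1 `|a1| * (Num.max 1 `|a2| * (Num.max 1 `|a1| * (Num.max 1 `|a2| * 1)))
          = Num.max 1 `|a1| ^+ 2 * Num.max 1 `|a2| ^+ 2 by ring.
move=> le_mahler; split; apply: le_trans le_mahler.
- have -> : ratr (biquad_sqmean x y z w) = (`|a1| ^+ 2 + `|a2| ^+ 2) / 2%:R.
    by rewrite Dsq1 Dsq2 /a1 /a2 /biquad /biquad_sqmean !rmorphN; field: sqrA sqrB.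
  by rewrite ler_pdivrMr ?ltr0n // mulr_natr mulr2n lerD.
- have -> : ratr (biquad_norm x y z w) = `|a1| ^+ 2 * `|a2| ^+ 2.
    by rewrite Dsq1 Dsq2 /a1 /a2 /biquad /biquad_norm /biquad_sqmean !rmorphN; ring: sqrA sqrB.
  exact: le12.
Qed.

End Biquadratic.

Lemma biquad_norm_sum_sqr (a b x y z w : rat) :
  biquad_norm a b x y z w =
    (x ^+ 2 - w ^+ 2 * (a * b)) ^+ 2 + 2%:R * b * (x * z + a * w * y) ^+ 2
    + 2%:R * a * (x * y + b * w * z) ^+ 2 + (a * y ^+ 2 - b * z ^+ 2) ^+ 2.
Proof. by rewrite /biquad_norm /biquad_sqmean; ring. Qed.

Lemma biquad_norm_ge (a b x y z w : rat) : 0 <= a -> 0 <= b ->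
  (a * y ^+ 2 - b * z ^+ 2) ^+ 2 <= biquad_norm a b x y z w /\
  2%:R * b * (x * z + a * w * y) ^+ 2 <= biquad_norm a b x y z w.
Proof.
move=> a_ge0 b_ge0; rewrite biquad_norm_sum_sqr.
have := sqr_ge0 (x ^+ 2 - w ^+ 2 * (a * b)); have := sqr_ge0 (a * y ^+ 2 - b * z ^+ 2).
have := mulr_ge0 (mulr_ge0 (ler0n _ 2) b_ge0) (sqr_ge0 (x * z + a * w * y)).
have := mulr_ge0 (mulr_ge0 (ler0n _ 2) a_ge0) (sqr_ge0 (x * y + b * w * z)).
by split; lra.
Qed.

Lemma Aint_sqr_int (c : algC) (r : rat) :
  c \in Aint -> c ^+ 2 = ratr r -> r \is a Num.int.
Proof.
move=> Aint_c Dc; rewrite -Cint_rat -Dc.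
by apply: Cint_rat_Aint; [rewrite Dc Crat_rat | rewrite rpredX].
Qed.

Lemma biquad_coords_int (m n l : nat) (A B : algC) (y z w : rat) :
    squarefree (m * l) -> squarefree (n * l) -> squarefree (m * n) ->
    A ^+ 2 = - ratr (m * l)%:R -> B ^+ 2 = - ratr (n * l)%:R ->
    [/\ ratr (4%:R * y) * A \in Aint, ratr (4%:R * z) * B \in Aint
      & ratr (4%:R * w) * (A * B) \in Aint] ->
  [/\ 4%:R * y \is a Num.int, 4%:R * z \is a Num.int & 4%:R * w * l%:R \is a Num.int].
Proof.
move=> sqf_ml sqf_nl sqf_mn sqrA sqrB [IyA IzB IwAB]; split.
- apply: (squarefree_int_of_sqrM sqf_ml); rewrite -rpredN.
  by apply: (Aint_sqr_int IyA); ring: sqrA.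
- apply: (squarefree_int_of_sqrM sqf_nl); rewrite -rpredN.
  by apply: (Aint_sqr_int IzB); ring: sqrB.
- apply: (squarefree_int_of_sqrM sqf_mn); apply: (Aint_sqr_int IwAB).
  by rewrite !natrM in sqrA sqrB *; ring: sqrA sqrB.
Qed.

Lemma biquad_norm_ge_l2 (m n l : nat) (x y z w : rat) :
    (forall u v : rat, u ^+ 2 * m%:R = v ^+ 2 * n%:R -> u = 0 /\ v = 0) ->
    4%:R * y \is a Num.int -> 4%:R * z \is a Num.int -> ~ (y = 0 /\ z = 0) ->
  (l ^ 2)%:R / 2304%:R <= biquad_norm (m * l)%:R (n * l)%:R x y z w.
Proof.
move=> mn_nonsq Iy Iz nyz.
set d := (4%:R * y) ^+ 2 * m%:R - (4%:R * z) ^+ 2 * n%:R.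
have d_int : d \is a Num.int by apply: rpredB; apply: rpredM; rewrite ?rpredX ?rpred_nat.
have d_neq0 : d != 0.
  apply/eqP => /eqP; rewrite subr_eq0 => /eqP /mn_nonsq [/eqP y0 /eqP z0].
  by apply: nyz; move: y0 z0; rewrite !mulf_eq0 !pnatr_eq0 /= => /eqP -> /eqP ->.
have d_ge1 := sqr_intr_ge1 d_int d_neq0.
have [norm_ge _] := biquad_norm_ge x y z w (ler0n _ (m * l)) (ler0n _ (n * l)).
have Dd : ((m * l)%:R * y ^+ 2 - (n * l)%:R * z ^+ 2) ^+ 2 = (l ^ 2)%:R * d ^+ 2 / 256%:R.
  by rewrite /d natrX !natrM; field.
rewrite Dd in norm_ge; apply: le_trans norm_ge.
have l2_ge0 : 0 <= (l ^ 2)%:R :> rat by [].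
by nra.
Qed.

Lemma biquad_sqmean_or_norm_ge_ln (m n l : nat) (x y z w : rat) :
    (0 < m)%N -> (0 < l)%N ->
    4%:R * y \is a Num.int -> 4%:R * z \is a Num.int -> 4%:R * w * l%:R \is a Num.int ->
    ~ (y = 0 /\ z = 0) -> ~ (z = 0 /\ w = 0) ->
  (l * n)%:R / 256%:R <= biquad_sqmean (m * l)%:R (n * l)%:R x y z w \/
  (l * n)%:R / 256%:R <= biquad_norm (m * l)%:R (n * l)%:R x y z w.
Proof.
move=> m_gt0 l_gt0 Iy Iz Iw nyz nzw.
have nl_ge0 : 0 <= (n * l)%:R :> rat := ler0n _ _.
have four_neq0 : 4%:R != 0 :> rat by rewrite pnatr_eq0.
rewrite mulnC; have [z0 | z_neq0] := eqVneq z 0; [right | left].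
- have y_neq0 : y != 0 by apply/eqP => y0; apply: nyz.
  have w_neq0 : w != 0 by apply/eqP => w0; apply: nzw.
  have l_neq0 : l%:R != 0 :> rat by rewrite pnatr_eq0 -lt0n.
  have K_ge1 : 1 <= m%:R ^+ 2 * (4%:R * w * l%:R) ^+ 2 * (4%:R * y) ^+ 2 :> rat.
    have W := sqr_intr_ge1 Iw (mulf_neq0 (mulf_neq0 four_neq0 w_neq0) l_neq0).
    have Y := sqr_intr_ge1 Iy (mulf_neq0 four_neq0 y_neq0).
    have M : 1 <= m%:R ^+ 2 :> rat by rewrite exprn_ege1 ?ler1n.
    exact: mulr_ege1 (mulr_ege1 M W) Y.
  have [_ norm_ge] := biquad_norm_ge x y z w (ler0n _ (m * l)) nl_ge0.
  have DK : 2%:R * (n * l)%:R * (x * z + (m * l)%:R * w * y) ^+ 2 =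
            2%:R * (n * l)%:R
              * (m%:R ^+ 2 * (4%:R * w * l%:R) ^+ 2 * (4%:R * y) ^+ 2) / 256%:R.
    by rewrite z0 !natrM; field.
  rewrite DK in norm_ge; apply: le_trans norm_ge.
  by nra.
- have Z := sqr_intr_ge1 Iz (mulf_neq0 four_neq0 z_neq0).
  have DP : biquad_sqmean (m * l)%:R (n * l)%:R x y z w =
            x ^+ 2 + y ^+ 2 * (m * l)%:R + (4%:R * z) ^+ 2 * (n * l)%:R / 16%:R
            + w ^+ 2 * ((m * l)%:R * (n * l)%:R).
    by rewrite /biquad_sqmean; field.
  rewrite DP.
  have := sqr_ge0 x; have := mulr_ge0 (sqr_ge0 y) (ler0n _ (m * l)).
  have := mulr_ge0 (sqr_ge0 w) (mulr_ge0 (ler0n _ (m * l)) nl_ge0).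
  by nra.
Qed.

Lemma sqr_sqa (m n l : nat) : sqa m n l ^+ 2 = - ratr (m * l)%:R.
Proof. by rewrite sqrtCK rmorph_nat. Qed.

Lemma sqr_sqb (m n l : nat) : sqb m n l ^+ 2 = - ratr (n * l)%:R.
Proof. by rewrite sqrtCK rmorph_nat. Qed.

Lemma inK_sqa (m n l : nat) : inK m n l (sqa m n l).
Proof. by exists (0, 1, 0, 0); rewrite /= rmorph0 rmorph1; ring. Qed.

Lemma inK_sqb (m n l : nat) : inK m n l (sqb m n l).
Proof. by exists (0, 0, 1, 0); rewrite /= rmorph0 rmorph1; ring. Qed.

Theorem proposition4p1 (m n l : nat) :
  (0 < m)%N -> (0 < n)%N -> (0 < l)%N ->
  coprime m n -> coprime m l -> coprime n l ->
  squarefree m -> squarefree n -> squarefree l ->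
  (m < n)%N ->
  forall (alpha : algC) (M : algC),
    inOK m n l alpha ->
    (forall x, inK m n l x <-> inQgen alpha x) ->
    mahler_num alpha M ->
    [/\ ((l < n)%N -> (l * n)%:R / 256%:R <= M),
        ((n < l)%N -> (l ^ 2)%:R / 2304%:R <= M)
      & (l * n)%:R / 256%:R <= M].
Proof.
move=> m_gt0 n_gt0 l_gt0 cop_mn cop_ml cop_nl sqf_m sqf_n sqf_l lt_mn alpha M
  [[[[[x y] z] w] Dalpha] Aint_alpha] genK [p Zp ->].
have {}Dalpha : alpha = biquad (sqa m n l) (sqb m n l) x y z w := Dalpha.
subst alpha.
have mn_nonsq := ratio_nonsquare m_gt0 cop_mn sqf_m sqf_n lt_mn.
have ab_nonsq := nonsquare_ml_nl m_gt0 l_gt0 mn_nonsq.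
have ml_gt0 : 0 < (m * l)%:R :> rat by rewrite ltr0n muln_gt0 m_gt0.
have nl_gt0 : 0 < (n * l)%:R :> rat by rewrite ltr0n muln_gt0 n_gt0.
have sqrA := sqr_sqa m n l; have sqrB := sqr_sqb m n l.
have [nyz nyw nzw] := biquad_primitive ml_gt0 nl_gt0 sqrA sqrB ab_nonsq
  ((genK _).1 (inK_sqa m n l)) ((genK _).1 (inK_sqb m n l)).
have [Iy Iz Iw] := biquad_coords_int (squarefreeM cop_ml sqf_m sqf_l)
  (squarefreeM cop_nl sqf_n sqf_l) (squarefreeM cop_mn sqf_m sqf_n) sqrA sqrB
  (biquad_Aint_coords ml_gt0 nl_gt0 sqrA sqrB ab_nonsq Aint_alpha).
have [le_sqmean le_norm] := biquad_mahler_ge ml_gt0 nl_gt0 sqrA sqrB ab_nonsq Zp nyz nyw nzw.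
have ratr_natdiv (k d : nat) : (k%:R / d%:R : algC) = ratr (k%:R / d%:R).
  by rewrite fmorph_div !rmorph_nat.
have le_ln : (l * n)%:R / 256%:R <= mahler (map_poly intr p).
  rewrite ratr_natdiv.
  have [le | le] := biquad_sqmean_or_norm_ge_ln n x m_gt0 l_gt0 Iy Iz Iw nyz nzw.
  - by apply: le_trans le_sqmean; rewrite ler_rat.
  - by apply: le_trans le_norm; rewrite ler_rat.
split=> // _; rewrite ratr_natdiv; apply: le_trans le_norm.
by rewrite ler_rat (biquad_norm_ge_l2 l x w mn_nonsq Iy Iz nyz).
Qed.
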